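(* The online correlated rental algorithm described in the context (Algorithm 1) is a $\frac{1}{32}$-OCR algorithm. That is, for every integer $d\ge1$, every fixed sequence of proposals $Q_1,\dots,Q_n$, every round $j$ and every offline vertex $i$, with $j'=\mathrm{prev}^i_j$, $$\Delta\mu^i_j \ge \begin{cases} 0 & i\notin Q_j,\\ p^i_j & i\in Q_j,\ |Q_j|=1,\\ p^i_j/2 & i\in Q_j,\ |Q_j|=2,\ j'\le j-d,\\ p^i_j/2+\frac{1}{32}\,(p^i_{j'}-\Delta\mu^i_{j'}) & i\in Q_j,\ |Q_j|=2,\ j'>j-d.\end{cases}$$ In particular, a $\frac{1}{32}$-OCR online algorithm exists.
   Context: Online correlated rental setting: there is a finite set $V$ of offline vertices and an integer $d\ge1$. A sequence $Q_1,\dots,Q_n$ of subsets of $V$, each of size $1$ or $2$, is fixed in advance and revealed online; at round $j$ the algorithm receives $Q_j$ and must select one vertex of $Q_j$. Round $j$ is deterministic if $|Q_j|=1$ and randomized if $|Q_j|=2$. An offline vertex $i$ is matched at round $j$ if it is selected at round $j$ and it was not matched at any round $t$ with $j-d<t<j$ (matching is built greedily in increasing time). Define $\Delta\mu^i_j=\Pr[i \text{ is matched at round } j]$ and $p^i_j=1-\sum_{t=\max\{1,j-d+1\}}^{j-1}\Delta\mu^i_t$ (the probability that $i$ is available at round $j$). $\mathrm{prev}^i_j$ is the largest $j'<j$ with $i\in Q_{j'}$, and $-\infty$ if none exists. An algorithm is $\gamma$-OCR ($0\le\gamma\le1$) if the displayed inequalities hold with $\frac1{32}$ replaced by $\gamma$.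 Algorithm 1: it keeps a state $\tau_{i,t}\in\{\mathrm{sel},\mathrm{nsel},\mathrm{unk}\}$ for every $i\in V$ and every round $t$, initially all $\mathrm{unk}$. All random draws are fresh and independent. ''Reset $i$'' at round $j$ means setting $\tau_{i,t}=\mathrm{unk}$ for all $t\in[j+1,j+d-1]$. (1) If $Q_j=\{i_1\}$: reset $i_1$ and select $i_1$. (2) If $Q_j=\{i_1,i_2\}$: with probability $1/2$ the round is a sender, and otherwise it is a receiver. - Sender: draw $\ell,m\in\{1,2\}$ independently and uniformly. Reset $i_{3-m}$. Set $\tau_{i_m,t}=\mathrm{sel}$ for all $t\in[j+1,j+d-1]$ if $\ell=m$, and $\tau_{i_m,t}=\mathrm{nsel}$ for those $t$ otherwise. Select $i_\ell$. - Receiver: draw $m\in\{1,2\}$ uniformly. If $\tau_{i_m,j}=\mathrm{sel}$, let $\ell=3-m$; if $\tau_{i_m,j}=\mathrm{nsel}$, let $\ell=m$; otherwise draw $\ell\in\{1,2\}$ uniformly. Reset $i_1$ and $i_2$. Select $i_\ell$. *)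

From HB Require Import structures.
From mathcomp Require Import all_boot all_order all_algebra.
Set Implicit Arguments. Unset Strict Implicit. Unset Printing Implicit Defensive.
Import Order.TTheory GRing.Theory Num.Theory.
Local Open Scope ring_scope.

(* Rounds are 0-indexed: round t of the paper is round t-1 here. *)

(* A proposal Q_j: either {i} (deterministic) or {i1,i2} (randomized, i1 <> i2). *)
Inductive proposal (V : Type) := One of V | Two of V & V.
Arguments One {V}. Arguments Two {V}.

Definition in_prop (V : eqType) (i : V) (q : proposal V) : bool :=
  match q with One a => a == i | Two a b => (a == i) || (b == i) end.

Inductive tstate := Sel | NSel | Unk.

Definition taus (V : Type) := V -> nat -> tstate.
Definition tau0 (V : Type) : taus V := fun (_ : V) (_ : nat) => Unk.

Definition setv (V : eqType) (d : nat) (tau : taus V) (i : V) (j : nat) (v : tstate)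
  : taus V :=
  fun i' t => if (i' == i) && (j.+1 <= t)%N && (t <= j + d - 1)%N then v else tau i' t.

Definition reset (V : eqType) (d : nat) (tau : taus V) (i : V) (j : nat) : taus V :=
  setv d tau i j Unk.

(* Fresh independent uniform random bits used at one round:
   (s, l, m, r) : s = "sender", l = the draw of ell (sender), m = the draw of m,
   r = the uniform draw of ell for a receiver when tau = unk.
   Index 1 is encoded by false, index 2 by true. *)
Definition coin := (bool * bool * bool * bool)%type.

Definition step (V : eqType) (d : nat) (tau : taus V) (j : nat) (q : proposal V)
  (c : coin) : taus V * V :=
  match q with
  | One i => (reset d tau i j, i)
  | Two i1 i2 =>
      let '(s, l, m, r) := c in
      let pick (b : bool) := if b then i2 else i1 in
      if s then
        let tau1 := reset d tau (pick (~~ m)) j in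
        (setv d tau1 (pick m) j (if l == m then Sel else NSel), pick l)
      else
        let lb := match tau (pick m) j with Sel => ~~ m | NSel => m | Unk => r end in
        (reset d (reset d tau i1 j) i2 j, pick lb)
  end.

Fixpoint sim (V : eqType) (d : nat) (Q : nat -> proposal V) (cs : nat -> coin)
  (k : nat) : taus V * seq V :=
  match k with
  | 0 => (@tau0 V, [::])
  | k'.+1 => let '(tau, s) := sim d Q cs k' in
             let '(tau', v) := step d tau k' (Q k') (cs k') in (tau', rcons s v)
  end.

Definition coins (n : nat) (w : {ffun 'I_n -> coin}) (t : nat) : coin :=
  if insub t is Some o then w o else (false, false, false, false).

Definition selected (V : eqType) (n d : nat) (Q : nat -> proposal V)
  (w : {ffun 'I_n -> coin}) (t : nat) : option V :=
  nth None (map Some (sim d Q (coins w) n).2) t.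

Fixpoint matched_list (V : finType) (d : nat) (sel : nat -> option V) (k : nat)
  : seq {ffun V -> bool} :=
  match k with
  | 0 => [::]
  | j.+1 => let ml := matched_list d sel j in
      rcons ml [ffun i => (sel j == Some i) &&
        all (fun t => ~~ (nth [ffun=> false] ml t i))
            [seq t <- iota 0 j | (j < t + d)%N]]
  end.

Definition matched (V : finType) (n d : nat) (Q : nat -> proposal V)
  (w : {ffun 'I_n -> coin}) (i : V) (j : nat) : bool :=
  nth [ffun=> false] (matched_list d (selected d Q w) j.+1) j i.

Definition dmu (V : finType) (n d : nat) (Q : nat -> proposal V) (i : V) (j : nat) : rat :=
  (#|[set w : {ffun 'I_n -> coin} | matched d Q w i j]|)%:R
  / (#|{: {ffun 'I_n -> coin}}|)%:R.

Definition pav (V : finType) (n d : nat) (Q : nat -> proposal V) (i : V) (j : nat) : rat :=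
  1 - \sum_((j.+1 - d)%N <= t < j) dmu n d Q i t.

(* prev^i_j : largest j' < j with i in Q_j', None for -infinity *)
Definition prev_round (V : finType) (Q : nat -> proposal V) (i : V) (j : nat) : option nat :=
  last None [seq Some t | t <- iota 0 j & in_prop i (Q t)].

(* Unrolling Algorithm 1, the state tau_{v,t} read at round t is the one written
   by the last round r < t proposing v if t < r + d, and unk otherwise; it is sel
   or nsel only if r was a sender drawing m = v. So each choice is a function of
   the coins of its round and of earlier rounds, and probabilities are counts
   over the 16^n coin vectors.
   Fix a randomized round j proposing i and k. Resampling the coin of round j,
   which is independent of i being available at j and of the states read at j,
   gives 16 #M = 8 #A + 2 (#N_i - #S_i) + 2 (#S_k - #N_k), where A is "i available
   at j", M is "i matched at j", and S_v, N_v count the outcomes of A with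
   tau_{v,j} = sel, nsel. Flipping l at the previous round of k maps N_k
   injectively into S_k, since it can only unselect i there. Flipping l at
   j' = prev^i_j maps S_i injectively into the outcomes of N_i where i was
   unavailable at j', while those where i was available at j' are an eighth of
   the outcomes available at j'. Hence #M >= #A / 2 + #A_{j'} / 64, and
   p_{j'} - Delta mu_{j'} <= p_{j'} / 2 by the same bound at round j' (it is 0
   if j' is deterministic). *)

From HB Require Import structures.
From mathcomp Require Import all_boot all_order all_algebra.
From mathcomp Require Import zify ring lra.
Import Order.TTheory GRing.Theory Num.Theory.
Set Implicit Arguments. Unset Strict Implicit. Unset Printing Implicit Defensive.

Definition tstate_eqb (x y : tstate) : bool :=
  match x, y with Sel, Sel | NSel, NSel | Unk, Unk => true | _, _ => false end.

Lemma tstate_eqP : Equality.axiom tstate_eqb.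
Proof. by do 2 case; constructor. Qed.

HB.instance Definition _ := hasDecEq.Build tstate tstate_eqP.

Section PrevRound.
Variables (V : finType) (Q : nat -> proposal V) (v : V).

Lemma prev_roundS k :
  prev_round Q v k.+1 = if in_prop v (Q k) then Some k else prev_round Q v k.
Proof.
rewrite /prev_round -addn1 iotaD /= filter_cat map_cat /=.
by case: (in_prop v (Q k)); rewrite /= ?last_cat ?cats0.
Qed.

Lemma prev_roundP t r : prev_round Q v t = Some r ->
  [/\ (r < t)%N, in_prop v (Q r) & forall s, (r < s < t)%N -> ~~ in_prop v (Q s)].
Proof.
elim: t => // t IH; rewrite prev_roundS; case: ifP => [Qt [<-]|Qt /IH [rt Qr gap]].
  by split=> // s; lia.
split=> [||s /andP[rs st]]; [lia | by [] |].
by have [st'|ts|->] := ltngtP s t; [apply: gap; rewrite rs | lia | rewrite Qt].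
Qed.

End PrevRound.

Section AlgorithmState.
Variables (V : finType) (d : nat) (Q : nat -> proposal V).

Definition pick (a b : V) (x : bool) : V := if x then b else a.

Lemma pick_inj (a b : V) : a != b -> injective (pick a b).
Proof. by move=> /negP ab [] [] // /eqP; rewrite ?(eq_sym b) => /ab. Qed.

Definition sent_state (q : proposal V) (c : coin) (v : V) : tstate :=
  if q is Two a b then
    let '(s, l, m, _) := c in
    if s && (pick a b m == v) then (if l == m then Sel else NSel) else Unk
  else Unk.

Definition round_choice (q : proposal V) (tau : V -> tstate) (c : coin) : V :=
  match q with
  | One a => a
  | Two a b => let '(s, l, m, r) := c in
      if s then pick a b l
      else pick a b (match tau (pick a b m) with Sel => ~~ m | NSel => m | Unk => r end)
  end.

(* tau_{v,t} after the first [k] rounds, for [k <= t]: every proposal of [v]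
   resets or overwrites all that was written for [v] before. *)
Definition state_after (cs : nat -> coin) (v : V) (k t : nat) : tstate :=
  if prev_round Q v k is Some r then
    if (t < r + d)%N then sent_state (Q r) (cs r) v else Unk
  else Unk.

Definition state cs v t := state_after cs v t t.

Definition chosen cs t : V := round_choice (Q t) (fun v => state cs v t) (cs t).

Lemma step_state tau k q c v t : (k < t)%N ->
  (step d tau k q c).1 v t =
  if in_prop v q && (t < k + d)%N then sent_state q c v else tau v t.
Proof.
move=> kt; have dt : (t < k + d)%N = (t <= k + d - 1)%N by lia.
case: q => [a|a b] /=.
  by rewrite /reset /setv dt kt eq_sym andbT; case: (a == v).
case: c => [[[[] l] m] r]; rewrite /= /reset /setv /pick dt kt /= !andbT ![_ == v]eq_sym;
  case: (t <= _)%N; rewrite /= ?andbF ?andbT //;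
  by case: m; case: (v == a); case: (v == b).
Qed.

Lemma sim_state cs k v t : (k <= t)%N -> (sim d Q cs k).1 v t = state_after cs v k t.
Proof.
elim: k v t => [|k IH] v t kt //=.
case E: (sim d Q cs k) => [tau s]; case E2: step => [tau' x] /=.
have := step_state tau (Q k) (cs k) v kt; rewrite E2 /= => ->.
have -> : tau v t = state_after cs v k t by rewrite -IH ?E // ltnW.
rewrite /state_after prev_roundS; case: (in_prop v (Q k)) => //=.
case: ifP => // tkd; case P: prev_round => [r|] //.
by have [rk _ _] := prev_roundP P; rewrite ifF //; lia.
Qed.

Lemma sim_chosen cs k : (sim d Q cs k).2 = map (chosen cs) (iota 0 k).
Proof.
elim: k => // k IH.
have -> : iota 0 k.+1 = rcons (iota 0 k) k by rewrite -cats1 -addn1 iotaD.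
rewrite map_rcons -IH /=.
have St := @sim_state cs k; case E: (sim d Q cs k) St => [tau s] /= St.
case E2: (step d tau k (Q k) (cs k)) => [tau' x] /=; congr rcons; move: E2.
rewrite /chosen /step /round_choice; case: (Q k) => [a|a b] /=; first by case.
by case: (cs k) => [[[[] l] m] r]; rewrite ?St //; case.
Qed.

Lemma eq_round_choice q tau tau' c :
  (forall v, in_prop v q -> tau v = tau' v) -> round_choice q tau c = round_choice q tau' c.
Proof.
case: q => //= a b eq_tau; case: c => [[[[] l] m] r] //.
by rewrite eq_tau // /pick; case: m; rewrite eqxx ?orbT.
Qed.

Lemma round_choice_in q tau c : in_prop (round_choice q tau c) q.
Proof.
case: q => /= [a|a b]; first by rewrite eqxx.
case: c => [[[s l] m] r]; rewrite /pick.
by case: s; [case: l | case: (match _ with Sel => _ | _ => _ end)]; rewrite eqxx ?orbT.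
Qed.

Lemma chosen_in cs t : in_prop (chosen cs t) (Q t).
Proof. exact: round_choice_in. Qed.

Lemma chosen_sender cs t a b l m r : Q t = Two a b -> cs t = (true, l, m, r) ->
  chosen cs t = pick a b l.
Proof. by rewrite /chosen => -> ->. Qed.

Lemma eq_state cs cs' v t : (forall s, (s < t)%N -> cs s = cs' s) ->
  state cs v t = state cs' v t.
Proof.
rewrite /state /state_after; case P: prev_round => [r|] // eq_cs.
by have [rt _ _] := prev_roundP P; rewrite eq_cs.
Qed.

Lemma eq_chosen cs cs' t : (forall s, (s <= t)%N -> cs s = cs' s) ->
  chosen cs t = chosen cs' t.
Proof.
move=> eq_cs; rewrite /chosen eq_cs //; apply: eq_round_choice => v _.
by apply: eq_state => s st; rewrite eq_cs // ltnW.
Qed.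

Lemma state_prev cs v t r : prev_round Q v t = Some r -> (t < r + d)%N ->
  state cs v t = sent_state (Q r) (cs r) v.
Proof. by rewrite /state /state_after => -> ->. Qed.

Lemma sent_stateP q c v : sent_state q c v != Unk ->
  exists a b l m r, [/\ q = Two a b, c = (true, l, m, r), pick a b m = v &
     sent_state q c v = if l == m then Sel else NSel].
Proof.
case: q => //= a b; case: c => [[[[] l] m] r] //=.
by case: (pick a b m =P v) => [<- _|_]; first exists a, b, l, m, r; rewrite ?eqxx.
Qed.

Lemma sent_state_uniq q c v v' :
  sent_state q c v != Unk -> sent_state q c v' != Unk -> v = v'.
Proof.
case: q => //= a b; case: c => [[[[] l] m] r] //=.
by case: (pick a b m =P v) => [<-|_]; case: (pick a b m =P v') => [<-|_]; rewrite ?eqxx.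
Qed.

Definition flip_sender_bit (c : coin) : coin := let '(s, l, m, r) := c in (s, ~~ l, m, r).

Definition flip_state (x : tstate) := match x with Sel => NSel | NSel => Sel | Unk => Unk end.

Lemma sent_state_flip q c v :
  sent_state q (flip_sender_bit c) v = flip_state (sent_state q c v).
Proof.
case: q => //= a b; case: c => [[[s l] m] r] /=.
by case: (s && _) => //; case: l; case: m.
Qed.

Lemma state_flip cs cs' r v t : (forall s, s != r -> cs' s = cs s) ->
  cs' r = flip_sender_bit (cs r) ->
  state cs' v t = (if prev_round Q v t == Some r then flip_state else id) (state cs v t).
Proof.
move=> eq_cs flip_r; rewrite /state /state_after; case: prev_round => [r'|] //=.
case: eqP => [[->]|r'r]; first by rewrite flip_r sent_state_flip; case: ifP.
by rewrite eq_cs //; apply/eqP => r'E; apply: r'r; rewrite r'E.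
Qed.

End AlgorithmState.

Section GreedyMatching.
Variable d : nat.

Definition window t := [seq s <- iota 0 t | (t < s + d)%N].

Lemma mem_window t s : (s \in window t) = (s < t < s + d)%N.
Proof. by rewrite mem_filter mem_iota /= andbC; lia. Qed.

Lemma window_index_iota t : window t = index_iota (t.+1 - d) t.
Proof.
apply: (irr_sorted_eq ltn_trans ltnn).
- exact: (sorted_filter ltn_trans _ (iota_ltn_sorted 0 t)).
- exact: iota_ltn_sorted.
- by move=> s; rewrite mem_window mem_index_iota; lia.
Qed.

(* [matched_list] for a single vertex, selected at the rounds [t] with [x t]. *)
Fixpoint greedy_list (x : nat -> bool) k : seq bool :=
  if k is j.+1 then
    let l := greedy_list x j in rcons l (x j && all (fun t => ~~ nth false l t) (window j))
  else [::].

Definition greedy x t := nth false (greedy_list x t.+1) t.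

Definition vacant x j := all (fun t => ~~ greedy x t) (window j).

Lemma size_greedy_list x k : size (greedy_list x k) = k.
Proof. by elim: k => //= k IH; rewrite size_rcons IH. Qed.

Lemma nth_greedy_list x k t : (t < k)%N -> nth false (greedy_list x k) t = greedy x t.
Proof.
elim: k => // k IH tk; rewrite /= nth_rcons size_greedy_list.
case: (ltngtP t k) => [/IH //| |->]; first lia.
by rewrite /greedy /= nth_rcons size_greedy_list ltnn eqxx.
Qed.

Lemma greedyE x t : greedy x t = x t && vacant x t.
Proof.
rewrite {1}/greedy /= nth_rcons size_greedy_list ltnn eqxx; congr (_ && _).
by apply: eq_in_all => s; rewrite mem_window => /andP[st _]; rewrite nth_greedy_list.
Qed.

Lemma greedy_sel x t : greedy x t -> x t.
Proof. by rewrite greedyE => /andP[]. Qed.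

Lemma greedy_not_vacant x t s : greedy x s -> (s < t < s + d)%N -> ~~ vacant x t.
Proof. by move=> xs st; apply/allPn; exists s; rewrite ?mem_window ?xs. Qed.

Lemma eq_greedy_list x y k :
  (forall s, (s < k)%N -> x s = y s) -> greedy_list x k = greedy_list y k.
Proof.
elim: k => //= k IH eq_xy.
by rewrite IH ?eq_xy // => s sk; apply: eq_xy; lia.
Qed.

Lemma eq_greedy x y t : (forall s, (s <= t)%N -> x s = y s) -> greedy x t = greedy y t.
Proof. by move=> eq_xy; rewrite /greedy (@eq_greedy_list x y). Qed.

Lemma eq_vacant x y j : (forall s, (s < j)%N -> x s = y s) -> vacant x j = vacant y j.
Proof.
move=> eq_xy; apply: eq_in_all => t; rewrite mem_window => /andP[tj _].
by rewrite (@eq_greedy x y) // => s st; apply: eq_xy; lia.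
Qed.

Lemma greedy_unselect (x y : nat -> bool) u j : (u < j)%N ->
  (forall s, (s < j)%N -> s != u -> x s = y s) -> ~~ greedy x u -> ~~ y u ->
  forall t, (t < j)%N -> greedy x t = greedy y t.
Proof.
move=> uj eq_xy xu yu t; elim/ltn_ind: t => t IH tj.
have [->|tu] := eqVneq t u.
  by rewrite (negbTE xu); apply/esym/negbTE; apply: contra yu; apply: greedy_sel.
rewrite !greedyE eq_xy //; congr (_ && _); apply: eq_in_all => s.
by rewrite mem_window => /andP[st _]; rewrite IH //; lia.
Qed.

Lemma vacant_unselect (x y : nat -> bool) r j : (r < j < r + d)%N ->
  (forall s, (s < j)%N -> s != r -> x s = y s) -> (y r -> x r) ->
  vacant x j -> vacant y j.
Proof.
move=> rj eq_xy yx vacant_x.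
have [xyr|xyr] := eqVneq (x r) (y r).
  rewrite -(@eq_vacant x) // => s sj.
  by have [->|] := eqVneq s r; last exact: eq_xy.
have yr : ~~ y r by apply: contra xyr => yr; rewrite yr (yx yr).
have unmatched_r : ~~ greedy x r by apply: contraL vacant_x => /greedy_not_vacant; apply.
move: vacant_x; congr is_true; apply: eq_in_all => t; rewrite mem_window => /andP[tj _].
by rewrite (greedy_unselect _ eq_xy unmatched_r yr) //; lia.
Qed.

Lemma greedy_apart x s t : greedy x s -> greedy x t -> (s < t)%N -> (s + d <= t)%N.
Proof.
move=> xs xt st; rewrite leqNgt; apply: contraL (xt) => tsd.
by rewrite greedyE negb_and (greedy_not_vacant xs) ?st ?orbT.
Qed.

Lemma vacant_add_matched x j : (vacant x j + \sum_(j.+1 - d <= t < j) greedy x t = 1)%N.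
Proof.
rewrite /vacant window_index_iota.
have [unmatched|] := boolP (all _ _).
  by rewrite big1_seq // => t /andP[_ /(allP unmatched)/negbTE ->].
case/allPn => t0 t0_win; rewrite negbK => xt0.
rewrite (bigD1_seq t0) ?iota_uniq //= xt0 big1_seq // => t /andP[tt0 t_win].
case xt: (greedy x t) => //; move: t_win t0_win; rewrite !mem_index_iota.
case: (ltngtP t t0) => [tt0'|t0t|eq_t]; last by rewrite eq_t eqxx in tt0.
- by have := greedy_apart xt xt0 tt0'; lia.
- by have := greedy_apart xt0 xt t0t; lia.
Qed.

End GreedyMatching.

Section Resampling.
Variables (I C : finType).

Definition fupd (w : {ffun I -> C}) (o : I) (c : C) : {ffun I -> C} :=
  [ffun o' => if o' == o then c else w o'].

Lemma fupd_id (w : {ffun I -> C}) o c : fupd (fupd w o c) o (w o) = w.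
Proof. by apply/ffunP => o'; rewrite !ffunE; case: eqP => // ->. Qed.

(* [(w, c) |-> (fupd w o c, w o)] is an involution. *)
Lemma sum_resample (h : {ffun I -> C} -> nat) o :
  (#|C| * \sum_w h w = \sum_w \sum_(c : C) h (fupd w o c))%N.
Proof.
pose swap (p : {ffun I -> C} * C) := (fupd p.1 o p.2, p.1 o).
have swapK : involutive swap by move=> [w c]; rewrite /swap /= fupd_id ffunE eqxx.
rewrite pair_bigA (reindex_inj (inv_inj swapK)) /=.
rewrite (eq_bigr (fun p => h p.1)) => [|[w c] _]; last by rewrite /= fupd_id.
rewrite -(pair_bigA _ (fun w _ => h w)) big_distrr /=.
by apply: eq_bigr => w _; rewrite sum_nat_const.
Qed.

End Resampling.

Lemma card_coin : #|{: coin}| = 16%N.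
Proof. by rewrite !card_prod card_bool. Qed.

Section Coins.
Variable n : nat.
Implicit Types (w : {ffun 'I_n -> coin}) (o : 'I_n).

Lemma coins_ord w o : coins w o = w o.
Proof. by rewrite /coins valK. Qed.

Lemma coins_fupd w o c t : coins (fupd w o c) t = if t == o :> nat then c else coins w t.
Proof.
rewrite /coins; case: insubP => [o' _ <-|/negP to]; first by rewrite ffunE.
by case: eqP => // t_o; case: to; rewrite t_o.
Qed.

Definition flip_at o w := fupd w o (flip_sender_bit (w o)).

Lemma flip_atK o : involutive (flip_at o).
Proof.
move=> w; apply/ffunP => o'; rewrite !ffunE eqxx.
by case: eqP => // ->; case: (w o) => [[[? ?] ?] ?]; rewrite /= negbK.
Qed.

Lemma coins_flip_at o w t : coins (flip_at o w) t =
  if t == o :> nat then flip_sender_bit (coins w t) else coins w t.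
Proof. by rewrite coins_fupd; case: eqP => // ->; rewrite coins_ord. Qed.

End Coins.

Lemma sum_coin (F : coin -> nat) :
  (\sum_c F c = \sum_(s : bool) \sum_(l : bool) \sum_(m : bool) \sum_(r : bool) F (s, l, m, r))%N.
Proof. by rewrite !pair_bigA; apply: eq_bigr => -[[[]]]. Qed.

(* Over the 16 coins: 4 senders pick [i]; a receiver picks [i] 2 times out of 4
   for each unknown state, and 4 or 0 times when the state it reads is known. *)
Lemma sum_round_choice_two (V : finType) (a b i k : V) (tau : V -> tstate) : a != b ->
  ((i == a) && (k == b)) || ((i == b) && (k == a)) ->
  (\sum_c (round_choice (Two a b) tau c == i) + 2 * (tau i == Sel) + 2 * (tau k == NSel)
   = 8 + 2 * (tau i == NSel) + 2 * (tau k == Sel))%N.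
Proof.
move=> ab ik; rewrite sum_coin !big_bool /= /pick.
have ba : (b == a) = false by rewrite eq_sym; apply/negbTE.
by case/orP: ik => /andP[/eqP -> /eqP ->]; case: (tau a); case: (tau b);
  rewrite /= ?eqxx ?ba ?(negbTE ab).
Qed.

Section Counting.
Variables (V : finType) (d n : nat) (Q : nat -> proposal V).
Hypothesis Q_two_neq : forall t i1 i2, (t < n)%N -> Q t = Two i1 i2 -> i1 <> i2.

Local Notation coinvec := {ffun 'I_n -> coin}.
Implicit Types (w : coinvec) (o : 'I_n).

Definition tau w v t := state d Q (coins w) v t.

Lemma tau_fupd o c w v j : (j <= o)%N -> tau (fupd w o c) v j = tau w v j.
Proof.
move=> jo; apply: eq_state => s sj; rewrite coins_fupd ifF //.
by apply/negbTE; rewrite neq_ltn (leq_trans sj jo).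
Qed.

Lemma tau_flip_at o w v t : tau (flip_at o w) v t =
  (if prev_round Q v t == Some (val o) then flip_state else id) (tau w v t).
Proof.
by apply: state_flip => [s /negbTE|]; rewrite coins_flip_at ?eqxx // => ->.
Qed.

(* The flip only changes what round [o] wrote, which is for [z] alone. *)
Lemma chosen_flip_at o w j z :
  (forall v, sent_state (Q o) (coins w o) v != Unk -> v = z) ->
  (forall t, (o < t < j)%N -> ~~ in_prop z (Q t)) ->
  forall t, (t < j)%N -> t != o -> chosen d Q (coins (flip_at o w)) t = chosen d Q (coins w) t.
Proof.
move=> only_z z_absent t tj to; rewrite /chosen coins_flip_at (negbTE to).
apply: eq_round_choice => v vQt; rewrite -/(tau _ v t) tau_flip_at.
case: eqP => [P|] //=; have [ot _ _] := prev_roundP P.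
have vz : v != z by apply: contraTneq vQt => ->; apply: z_absent; rewrite ot tj.
rewrite /tau /state /state_after P; case: ifP => // _.
by have := only_z v; case: sent_state => // /(_ isT) vz'; rewrite vz' eqxx in vz.
Qed.

Lemma chosen_sent o w v : sent_state (Q o) (coins w o) v != Unk ->
  (chosen d Q (coins w) o == v) = (sent_state (Q o) (coins w o) v == Sel).
Proof.
move=> live; have [a [b [l [m [c [Qo wo mv ->]]]]]] := sent_stateP live.
have ab : a != b by apply/eqP; apply: Q_two_neq Qo.
by rewrite (chosen_sender _ Qo wo) -mv (inj_eq (pick_inj ab)); case: eqP.
Qed.

Lemma chosen_flip_sent o w v : sent_state (Q o) (coins w o) v != Unk ->
  (chosen d Q (coins (flip_at o w)) o == v) = (sent_state (Q o) (coins w o) v == NSel).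
Proof.
have flipped : sent_state (Q o) (coins (flip_at o w) o) v =
    flip_state (sent_state (Q o) (coins w o) v).
  by rewrite coins_flip_at eqxx sent_state_flip.
by move=> live; rewrite chosen_sent flipped; case: sent_state live.
Qed.

Variable i : V.

Definition selects_i w t := chosen d Q (coins w) t == i.
Definition avail w j := vacant d (selects_i w) j.
Definition matched_i w t := greedy d (selects_i w) t.

Definition count_avail j := (\sum_w avail w j)%N.
Definition count_matched j := (\sum_w matched_i w j)%N.
Definition count_avail_state j v t x := (\sum_w (avail w j && (tau w v t == x)))%N.

Lemma selects_i_fupd o c w t : (t < o)%N -> selects_i (fupd w o c) t = selects_i w t.
Proof.
move=> to; rewrite /selects_i (@eq_chosen _ _ _ _ (coins w)) // => s st.
by rewrite coins_fupd ifF //; apply/negbTE; rewrite neq_ltn (leq_ltn_trans st to).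
Qed.

Lemma avail_fupd o c w j : (j <= o)%N -> avail (fupd w o c) j = avail w j.
Proof. by move=> jo; apply: eq_vacant => s sj; apply: selects_i_fupd; apply: leq_trans jo. Qed.

Lemma count_matched_one j : Q j = One i -> count_matched j = count_avail j.
Proof.
by move=> Qj; apply: eq_bigr => w _; rewrite /matched_i greedyE /selects_i /chosen Qj eqxx.
Qed.

Lemma count_matched_two j a b k : (j < n)%N -> Q j = Two a b ->
  ((i == a) && (k == b)) || ((i == b) && (k == a)) ->
  (16 * count_matched j + 2 * count_avail_state j i j Sel + 2 * count_avail_state j k j NSel
   = 8 * count_avail j + 2 * count_avail_state j i j NSel + 2 * count_avail_state j k j Sel)%N.
Proof.
move=> jn Qj ik; pose o := Ordinal jn.
have ab : a != b by apply/eqP; apply: Q_two_neq Qj.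
have := sum_resample (matched_i^~ j) o; rewrite card_coin => ->.
rewrite /count_avail_state !big_distrr -!big_split /=; apply: eq_bigr => w _.
have matched_fupd c : matched_i (fupd w o c) j =
    (round_choice (Two a b) (fun v => tau w v j) c == i) && avail w j.
  rewrite /matched_i greedyE -/(avail _ j) avail_fupd //; congr (_ && _).
  rewrite /selects_i /chosen coins_fupd eqxx Qj; congr (_ == _).
  by apply: eq_round_choice => v _; apply: tau_fupd.
under eq_bigr do rewrite matched_fupd.
case: (avail w j); last by rewrite big1 // => c _; rewrite andbF.
by under eq_bigr do rewrite andbT; exact: (sum_round_choice_two _ ab ik).
Qed.

Lemma selects_i_flip_prev o u v j : prev_round Q v j = Some (val o) -> (j < o + d)%N ->
  tau u v j != Unk -> forall t, (t < j)%N -> t != o -> selects_i (flip_at o u) t = selects_i u t.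
Proof.
move=> P od live t tj to; have [_ _ v_gap] := prev_roundP P.
rewrite /selects_i (chosen_flip_at _ v_gap) // => v' live'.
by apply: (sent_state_uniq live'); rewrite -(state_prev _ P od).
Qed.

(* Flipping the sender bit of the previous round of [k] turns [NSel] into [Sel]
   and can only remove a selection of [i]. *)
Lemma count_other_nsel_le_sel j k : (j < n)%N -> i != k ->
  (count_avail_state j k j NSel <= count_avail_state j k j Sel)%N.
Proof.
move=> jn ik; rewrite /count_avail_state.
case P: (prev_round Q k j) => [r|]; last first.
  by rewrite big1 // => w _; rewrite /tau /state /state_after P andbF.
case: (ltnP j (r + d)) => rd; last first.
  by rewrite big1 // => w _; rewrite /tau /state /state_after P ltnNge rd andbF.
have [rj _ _] := prev_roundP P; pose o := Ordinal (ltn_trans rj jn).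
have flip_nsel u : avail u j -> tau u k j = NSel ->
    avail (flip_at o u) j && (tau (flip_at o u) k j == Sel).
  move=> avail_u nsel; rewrite tau_flip_at P eqxx nsel eqxx andbT.
  have sent : tau u k j = sent_state (Q o) (coins u o) k by apply: state_prev P rd.
  have live : sent_state (Q o) (coins u o) k != Unk by rewrite -sent nsel.
  apply: (vacant_unselect (r := r) _ _ _ avail_u) => [|s sj so|]; first by rewrite rj.
    by rewrite (selects_i_flip_prev (o := o) P) ?sent.
  move=> /eqP chosen_i; move: (chosen_flip_sent live).
  by rewrite -sent nsel eqxx chosen_i (negbTE ik).
rewrite (reindex_inj (inv_inj (flip_atK o))); apply: leq_sum => u _.
case: andP => //= -[avail_fu /eqP nsel_fu].
by have := flip_nsel _ avail_fu nsel_fu; rewrite flip_atK => ->.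
Qed.

Lemma count_sel_add_prev_nsel_le j j' : (j < n)%N ->
  prev_round Q i j = Some j' -> (j < j' + d)%N ->
  (count_avail_state j i j Sel + count_avail_state j' i j NSel
    <= count_avail_state j i j NSel)%N.
Proof.
move=> jn P jd; have [j'j _ i_gap] := prev_roundP P.
pose o := Ordinal (ltn_trans j'j jn).
have in_window : (j' < j < j' + d)%N by rewrite j'j.
have sent u : tau u i j = sent_state (Q o) (coins u o) i by apply: state_prev P jd.
have flip_sel u : avail u j -> tau u i j = Sel ->
    [&& avail (flip_at o u) j, tau (flip_at o u) i j == NSel & ~~ avail u j'].
  move=> avail_u sel; rewrite tau_flip_at P eqxx sel eqxx /=.
  have live : sent_state (Q o) (coins u o) i != Unk by rewrite -sent sel.
  apply/andP; split.
    apply: (vacant_unselect in_window _ _ avail_u) => [s sj so|].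
      by rewrite (selects_i_flip_prev (o := o) P) ?sel.
    by rewrite /selects_i chosen_flip_sent // -sent sel.
  have : ~~ matched_i u j' by apply: (allP avail_u); rewrite mem_window.
  by rewrite /matched_i greedyE {1}/selects_i (chosen_sent (o := o)) // -sent sel.
have nsel_avail u : avail u j' -> tau u i j = NSel -> avail u j.
  move=> avail_u nsel; apply/allP => t; rewrite mem_window => /andP[tj jtd].
  have [tj'|j't|->] := ltngtP t j'.
  - by apply: (allP avail_u); rewrite mem_window tj' /=; lia.
  - apply: contra (i_gap t _) => [/greedy_sel/eqP <-|]; first exact: chosen_in.
    by rewrite j't.
  - apply/negP => /greedy_sel; rewrite /selects_i (chosen_sent (o := o)) -?sent ?nsel //.
rewrite /count_avail_state (reindex_inj (inv_inj (flip_atK o))) -big_split /=.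
apply: leq_sum => u _.
have avail_flip : avail (flip_at o u) j' = avail u j' by apply: avail_fupd.
case: andP => [[avail_fu /eqP sel_fu]|_] /=.
  have := flip_sel _ avail_fu sel_fu; rewrite flip_atK avail_flip.
  by case/and3P => -> -> /negbTE ->.
by case: andP => // -[avail_u /eqP nsel]; rewrite (nsel_avail _ avail_u nsel) nsel.
Qed.

Lemma count_sel_le_nsel j : (j < n)%N ->
  (count_avail_state j i j Sel <= count_avail_state j i j NSel)%N.
Proof.
move=> jn; case P: (prev_round Q i j) => [j'|]; last first.
  by rewrite /count_avail_state big1 // => w _; rewrite /tau /state /state_after P andbF.
case: (ltnP j (j' + d)) => jd.
  exact: leq_trans (leq_addr _ _) (count_sel_add_prev_nsel_le jn P jd).
by rewrite /count_avail_state big1 // => w _; rewrite /tau /state /state_after P ltnNge jd andbF.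
Qed.

Lemma count_prev_nsel j j' a b : (j < n)%N -> prev_round Q i j = Some j' -> (j < j' + d)%N ->
  Q j' = Two a b -> (8 * count_avail_state j' i j NSel = count_avail j')%N.
Proof.
move=> jn P jd Qj'; have [j'j i_j' _] := prev_roundP P.
pose o := Ordinal (ltn_trans j'j jn).
have ab : a != b by apply/eqP; apply: Q_two_neq Qj'; apply: ltn_trans j'j jn.
apply/eqP; rewrite -(eqn_pmul2l (isT : 0 < 2)%N) mulnA; apply/eqP.
have := sum_resample (fun w => avail w j' && (tau w i j == NSel)) o; rewrite card_coin => ->.
rewrite big_distrr /=; apply: eq_bigr => w _.
under eq_bigr => c _ do rewrite avail_fupd // /tau (state_prev _ P jd) coins_fupd eqxx Qj'.
case: (avail w j'); last by rewrite big1.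
rewrite sum_coin !big_bool /= /pick.
have ba : (b == a) = false by rewrite eq_sym; apply/negbTE.
by move: i_j'; rewrite Qj' /= => /orP[/eqP <-|/eqP <-]; rewrite ?eqxx ?ba ?(negbTE ab).
Qed.

Lemma count_matched_two_ge j a b : (j < n)%N -> Q j = Two a b -> in_prop i (Q j) ->
  (8 * count_avail j + 2 * count_avail_state j i j NSel
    <= 16 * count_matched j + 2 * count_avail_state j i j Sel)%N.
Proof.
move=> jn Qj; have ab : a != b by apply/eqP; apply: Q_two_neq Qj.
rewrite Qj /= => i_ab; pose k := if i == a then b else a.
have ik : ((i == a) && (k == b)) || ((i == b) && (k == a)).
  rewrite /k; case: (i =P a) => [->|ia]; first by rewrite !eqxx.
  by case/orP: i_ab => /eqP bi; [case: (ia (esym bi)) | rewrite -bi !eqxx orbT].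
have i_k : i != k by case/orP: ik ab => /andP[/eqP -> /eqP ->]; rewrite // eq_sym.
have := count_matched_two jn Qj ik; have := count_other_nsel_le_sel jn i_k; lia.
Qed.

Lemma count_avail_le_matched j a b : (j < n)%N -> Q j = Two a b -> in_prop i (Q j) ->
  (count_avail j <= 2 * count_matched j)%N.
Proof.
move=> jn Qj i_j; have := count_matched_two_ge jn Qj i_j; have := count_sel_le_nsel jn; lia.
Qed.

Lemma count_ocr j j' a b : (j < n)%N -> Q j = Two a b -> in_prop i (Q j) ->
  prev_round Q i j = Some j' -> (j < j' + d)%N ->
  (16 * count_avail j + count_avail j' <= 32 * count_matched j + count_matched j')%N.
Proof.
move=> jn Qj i_j P jd; have [j'j i_j' _] := prev_roundP P.
have j'n := ltn_trans j'j jn.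
have half_j := count_avail_le_matched jn Qj i_j.
case Qj': (Q j') => [a'|a' b'].
  have a'i : a' = i by apply/eqP; rewrite Qj' in i_j'.
  by rewrite a'i in Qj'; rewrite (count_matched_one Qj'); lia.
have := count_matched_two_ge jn Qj i_j; have := count_sel_add_prev_nsel_le jn P jd.
have := count_prev_nsel jn P jd Qj'; have := count_avail_le_matched j'n Qj' i_j'; lia.
Qed.

End Counting.

Section MatchedList.
Variables (V : finType) (d : nat) (sel : nat -> option V).

Lemma size_matched_list k : size (matched_list d sel k) = k.
Proof. by elim: k => //= k IH; rewrite size_rcons IH. Qed.

Lemma matched_list_greedy (i : V) k :
  map (fun f : {ffun V -> bool} => f i) (matched_list d sel k)
  = greedy_list d (fun s => sel s == Some i) k.
Proof.
elim: k => //= k IH; rewrite map_rcons IH ffunE; congr (rcons _ (_ && _)).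
apply: eq_in_all => t; rewrite mem_filter mem_iota => /andP[_ /andP[_ tk]].
by rewrite -IH (nth_map [ffun=> false]) // size_matched_list.
Qed.

End MatchedList.

Lemma card_set_sum_bool (T : finType) (P : pred T) : #|[set x | P x]| = (\sum_x P x)%N.
Proof. by rewrite -sum1_card big_mkcond; apply: eq_bigr => x _; rewrite inE; case: (P x). Qed.

Local Open Scope ring_scope.

Section Probabilities.
Variables (V : finType) (d n : nat) (Q : nat -> proposal V) (i : V).
Local Notation N := #|{: {ffun 'I_n -> coin}}|.

Lemma card_coinvec_gt0 : (0 < N)%N.
Proof. by rewrite card_ffun card_coin expn_gt0. Qed.

Lemma matched_greedy (w : {ffun 'I_n -> coin}) j : (j < n)%N ->
  matched d Q w i j = matched_i d Q i w j.
Proof.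
move=> jn; rewrite /matched -(nth_map _ false (fun f : {ffun V -> bool} => f i));
  last by rewrite size_matched_list.
rewrite matched_list_greedy -/(greedy _ _ j); apply: eq_greedy => s sj.
rewrite /selected sim_chosen (nth_map i) ?size_map ?size_iota; last lia.
by rewrite (nth_map 0%N) ?size_iota ?nth_iota //; lia.
Qed.

Lemma dmu_count j : (j < n)%N -> dmu n d Q i j = (count_matched d n Q i j)%:R / N%:R.
Proof.
move=> jn; rewrite /dmu card_set_sum_bool; congr (_%:R / _).
by apply: eq_bigr => w _; rewrite matched_greedy.
Qed.

Lemma pav_count j : (j < n)%N -> pav n d Q i j = (count_avail d n Q i j)%:R / N%:R.
Proof.
move=> jn; rewrite /pav.
have total : (count_avail d n Q i j + \sum_(j.+1 - d <= t < j) count_matched d n Q i t = N)%N.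
  rewrite /count_avail /count_matched exchange_big -big_split /= -sum1_card.
  by apply: eq_bigr => w _; apply: vacant_add_matched.
rewrite (eq_big_nat _ _ (F2 := fun t => (count_matched d n Q i t)%:R / N%:R)); last first.
  by move=> t /andP[_ tj]; apply: dmu_count; apply: ltn_trans jn.
rewrite -mulr_suml -natr_sum -total natrD; field.
by rewrite -natrD total pnatr_eq0 -lt0n card_coinvec_gt0.
Qed.

End Probabilities.

Lemma ratio_half_le (R : realFieldType) (a m N : nat) : (0 < N)%N -> (a <= 2 * m)%N ->
  a%:R / N%:R / 2 <= m%:R / N%:R :> R.
Proof.
move=> N_gt0 am; rewrite mulrAC ler_wpM2r ?invr_ge0 ?ler0n //.
by rewrite ler_pdivrMr // mulrC -natrM ler_nat.
Qed.

Lemma ratio_ocr_le (R : realFieldType) (a a' m m' N : nat) : (0 < N)%N ->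
  (16 * a + a' <= 32 * m + m')%N ->
  a%:R / N%:R / 2 + 1 / 32 * (a'%:R / N%:R - m'%:R / N%:R) <= m%:R / N%:R :> R.
Proof.
move=> N_gt0 le_nat.
have le_R : 16 * a%:R + a'%:R <= 32 * m%:R + m'%:R :> R by rewrite -!natrM -!natrD ler_nat.
have -> : a%:R / N%:R / 2 + 1 / 32 * (a'%:R / N%:R - m'%:R / N%:R)
    = (a%:R / 2 + (a'%:R - m'%:R) / 32) / N%:R :> R by field; rewrite pnatr_eq0 -lt0n.
rewrite ler_wpM2r ?invr_ge0 ?ler0n //; lra.
Qed.

Unset Implicit Arguments.
Unset Strict Implicit.

Theorem mainTheorem2 (V : finType) (d n : nat) (Q : nat -> proposal V) :
  (0 < d)%N ->
  (forall t i1 i2, (t < n)%N -> Q t = Two i1 i2 -> i1 <> i2) ->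
  forall (j : nat) (i : V), (j < n)%N ->
    (~~ in_prop i (Q j) -> 0 <= dmu n d Q i j) /\
    (Q j = One i -> pav n d Q i j <= dmu n d Q i j) /\
    (forall i1 i2, Q j = Two i1 i2 -> in_prop i (Q j) ->
       match prev_round Q i j with
       | Some j' =>
           if (j < j' + d)%N then
             pav n d Q i j / 2 + (1 / 32) * (pav n d Q i j' - dmu n d Q i j')
               <= dmu n d Q i j
           else pav n d Q i j / 2 <= dmu n d Q i j
       | None => pav n d Q i j / 2 <= dmu n d Q i j
       end).
Proof.
(* The bound holds for every [d], even the degenerate [d = 0]. *)
move=> _ Q_two_neq j i jn; have N_gt0 := card_coinvec_gt0 n.
split; first by rewrite /dmu divr_ge0 ?ler0n.
split; first by move=> Qj; rewrite pav_count // dmu_count // (count_matched_one _ _ Qj).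
move=> a b Qj i_j; rewrite pav_count // dmu_count //.
have half := ratio_half_le rat N_gt0 (count_avail_le_matched d Q_two_neq jn Qj i_j).
case P: (prev_round Q i j) => [j'|] //; case: ifP => // jd.
have [j'j _ _] := prev_roundP P; have j'n := ltn_trans j'j jn.
rewrite pav_count // dmu_count //.
exact: ratio_ocr_le N_gt0 (count_ocr Q_two_neq jn Qj i_j P jd).
Qed.
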